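(* Let $E$ be a finite directed graph satisfying Condition (EXC) and having no sources and no sinks. Then $\mathrm{h}_{\mathrm{alg}}(KE)=0$.
   Context: For a finite directed graph $E=(E^0,E^1,s,r)$: a sink is a vertex $v$ with $s^{-1}(v)=\emptyset$, a source a vertex with $r^{-1}(v)=\emptyset$. A cycle is a path $e_1\cdots e_n$ ($n\ge1$) with $s(e_1)=r(e_n)$ and $s(e_i)\neq s(e_j)$ for $i\neq j$. $E$ satisfies Condition (EXC) if every cycle is exclusive, i.e.\ no vertex of a cycle $C$ lies on a cycle other than a rotation of $C$. The path algebra $KE$ has basis all paths with concatenation product; standard filtration $V_n=$ span of paths of length $\le n$; $\mathrm{h}_{\mathrm{alg}}(KE)=0$ if $KE$ is finite-dimensional and $\limsup_n\frac1n\log\dim(V_n/V_{n-1})$ otherwise. *)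

From mathcomp Require Import all_boot all_order all_algebra.
From mathcomp Require Import all_classical all_reals all_analysis.
Set Implicit Arguments. Unset Strict Implicit. Unset Printing Implicit Defensive.
Import Order.TTheory GRing.Theory Num.Theory.

(* A finite directed graph E = (E^0, E^1, s, r) is given by finite types
   V (= E^0) and Ed (= E^1) and maps s r : Ed -> V.
   A path e_1 ... e_n has r(e_i) = s(e_{i+1}). *)
Section Graph.
Variables (V Ed : finType) (s r : Ed -> V).

Fixpoint epath (p : seq Ed) : bool :=
  match p with
  | e :: ((f :: _) as q) => (r e == s f) && epath q
  | _ => true
  end.

Definition is_sink (v : V) : Prop := forall e : Ed, s e <> v.
Definition is_source (v : V) : Prop := forall e : Ed, r e <> v.

Definition is_cycle (c : seq Ed) : bool :=
  match c with
  | [::] => false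
  | e :: _ => [&& epath c, s e == r (last e c) & uniq (map s c)]
  end.

Definition cycle_vertices (c : seq Ed) : seq V := map s c.

Definition condition_EXC : Prop :=
  forall c d : seq Ed, is_cycle c -> is_cycle d ->
    (exists v, v \in cycle_vertices c /\ v \in cycle_vertices d) ->
    exists k, d = rot k c.

(* number of paths of length n (paths of length 0 are the vertices).
   Since the paths form a basis of KE and V_n = span of paths of length <= n,
   this is dim (V_n / V_{n-1}) (with V_{-1} = 0). *)
Definition num_paths (n : nat) : nat :=
  if n is 0 then #|V| else #|[set t : n.-tuple Ed | epath t]|.

(* KE finite dimensional <-> only finitely many paths *)
Definition KE_finite_dim : Prop :=
  exists N, forall n, (N <= n)%N -> num_paths n = 0%N.

Local Open Scope ring_scope.
Local Open Scope ereal_scope.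

Definition h_alg (R : realType) : \bar R :=
  if pselect KE_finite_dim then 0
  else limn_esup (fun n : nat => ((ln (num_paths n)%:R) / n%:R)%:E).

End Graph.

From mathcomp Require Import all_boot all_order all_algebra.
From mathcomp Require Import all_classical all_reals all_analysis.
From mathcomp Require Import zify lra.
Set Implicit Arguments. Unset Strict Implicit. Unset Printing Implicit Defensive.
Import Order.TTheory GRing.Theory Num.Theory.

(* Under (EXC) a path is determined by its length and by the position of the
   first occurrence of each edge.  If the k-th edge already occurred earlier,
   the stretch between the two occurrences is a closed walk, so that edge
   starts a cycle; by (EXC) two cycles through a common vertex are rotations
   of each other, so at most one cycle edge leaves each vertex and the k-th
   edge is determined by the (k-1)-st.  Hence there are at most (n+1)^|E^1|
   paths of length n, and the logarithm of a polynomial in n is o(n). *)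

Lemma map_nonuniq_split (T U : eqType) (f : T -> U) (p : seq T) :
  ~~ uniq (map f p) ->
  exists p1 x p2 y p3, p = p1 ++ x :: p2 ++ y :: p3 /\ f x = f y.
Proof.
elim: p => [|a q IHq] //=; rewrite negb_and negbK => /orP[].
  case/mapP=> y /splitPr[p2 p3] fay.
  by exists [::], a, p2, y, p3.
case/IHq=> [p1 [x [p2 [y [p3 [-> fxy]]]]]].
by exists (a :: p1), x, p2, y, p3.
Qed.

Lemma nth_index_eq (T : eqType) (x0 a : T) (t : seq T) (k : nat) :
  k < size t -> index a t = k -> nth x0 t k = a.
Proof. by move=> lt_k idx; rewrite -idx nth_index // -index_mem idx. Qed.

Section Walks.
Variables (V Ed : finType) (s r : Ed -> V).

Definition consecutive : rel Ed := fun e f => r e == s f.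

Lemma epathE : epath s r =1 sorted consecutive.
Proof. by elim=> [|a [|b w] /= IHw] //; rewrite IHw. Qed.

Lemma closed_walk_cycle (a : Ed) (w : seq Ed) :
  path consecutive a w -> r (last a w) = s a -> exists c, is_cycle s r (a :: c).
Proof.
have [n] := ubnP (size w); elim: n => // n IHn in a w *; rewrite ltnS => sz_w walk closed.
have [uniq_w | /map_nonuniq_split[p1 [x [p2 [y [p3 [Ew sxy]]]]]]] :=
  boolP (uniq (map s (a :: w))).
  by exists w; rewrite /is_cycle epathE /= walk closed eqxx.
case: p1 Ew => [|b q] [ax ->] in sz_w walk closed *.
  rewrite cat_path /= in walk; case/and3P: walk => walk2 /eqP r_last _.
  apply: (IHn a p2 _ walk2); first by rewrite size_cat /= in sz_w; lia.
  by rewrite r_last -sxy ax.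
rewrite cat_path /= cat_path /= in walk; case/and5P: walk => walk_q /eqP r_q _ _ walk_y.
apply: (IHn a (q ++ y :: p3)).
- by rewrite !size_cat /= size_cat /= in sz_w *; lia.
- by rewrite cat_path /= walk_q walk_y /consecutive r_q sxy eqxx.
- by move: closed; rewrite !last_cat /= last_cat.
Qed.

Lemma repeated_edge_cycle (p w q : seq Ed) (a : Ed) :
  sorted consecutive (p ++ a :: w ++ a :: q) -> exists c, is_cycle s r (a :: c).
Proof.
rewrite sorted_cat_cons cat_path => /and3P[_ walk /andP[/eqP closed _]].
exact: closed_walk_cycle walk closed.
Qed.

Lemma revisited_edge_cycle (x0 : Ed) (t : seq Ed) (k : nat) :
  sorted consecutive t -> k < size t -> index (nth x0 t k) t < k ->
  exists c, is_cycle s r (nth x0 t k :: c).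
Proof.
move=> walk lt_k_t seen; set a := nth x0 t k in seen *.
have [p [w Etake]] : exists p w, take k t = p ++ a :: w.
  have : a \in take k t by rewrite in_take ?mem_nth.
  by case/splitPr=> p w; exists p, w.
apply: (@repeated_edge_cycle p w (drop k.+1 t)).
suff <- : take k t ++ drop k t = p ++ a :: w ++ a :: drop k.+1 t by rewrite cat_take_drop.
by rewrite (drop_nth x0 lt_k_t) Etake -catA.
Qed.

Section EXC.
Hypothesis exc : condition_EXC s r.

Lemma exc_cycle_head_unique (a b : Ed) (c d : seq Ed) :
  is_cycle s r (a :: c) -> is_cycle s r (b :: d) -> s a = s b -> a = b.
Proof.
move=> cyc_a cyc_b sab.
have [k Ebd] : exists k, b :: d = rot k (a :: c).
  by apply: exc cyc_a cyc_b _; exists (s a); rewrite /cycle_vertices /= !inE sab eqxx.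
have uniq_ac : uniq (map s (a :: c)) by case/and3P: cyc_a.
have [lt_k | ge_k] := ltnP k (size (a :: c)); last first.
  by move: Ebd; rewrite rot_oversize // => -[].
move: Ebd; rewrite /rot (drop_nth a lt_k) => -[bk _].
have : nth (s a) (map s (a :: c)) k = nth (s a) (map s (a :: c)) 0.
  by rewrite (nth_map a) // -bk -sab.
by move/eqP; rewrite nth_uniq ?size_map // => /eqP k0; rewrite bk k0.
Qed.

Lemma walk_eq_of_index (t1 t2 : seq Ed) :
  sorted consecutive t1 -> sorted consecutive t2 -> size t1 = size t2 ->
  index^~ t1 =1 index^~ t2 -> t1 = t2.
Proof.
move=> walk1 walk2 size12 idx12.
case: t1 => [|x0 w1] in walk1 size12 idx12 *; first by case: t2 {walk2 idx12} size12.
set t1 := x0 :: w1 in walk1 size12 idx12 *.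
have source_nth t i : sorted consecutive t -> i.+1 < size t ->
    s (nth x0 t i.+1) = r (nth x0 t i).
  by move=> /(sortedP x0)/[apply]/eqP.
apply: (eq_from_nth (x0 := x0) size12) => k; elim/ltn_ind: k => k IHk lt_k1.
have lt_k2 : k < size t2 by rewrite -size12.
have [seen1 | new1] := ltnP (index (nth x0 t1 k) t1) k; last first.
  have idx1 : index (nth x0 t1 k) t1 = k by apply/eqP; rewrite eqn_leq index_nth.
  by apply/esym/nth_index_eq; rewrite // -idx12.
have [seen2 | new2] := ltnP (index (nth x0 t2 k) t2) k; last first.
  have idx2 : index (nth x0 t2 k) t2 = k by apply/eqP; rewrite eqn_leq index_nth.
  by apply/nth_index_eq; rewrite // idx12.
case: k => [|k] in IHk lt_k1 lt_k2 seen1 seen2 *; first by [].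
have [c1 cyc1] := revisited_edge_cycle walk1 lt_k1 seen1.
have [c2 cyc2] := revisited_edge_cycle walk2 lt_k2 seen2.
apply: exc_cycle_head_unique cyc1 cyc2 _.
by rewrite !source_nth // IHk // ltnW.
Qed.

Lemma num_paths_poly_bound (n : nat) :
  0 < n -> num_paths s r n <= n.+1 ^ #|Ed|.
Proof.
case: n => // n _; rewrite /num_paths -(card_ord n.+2) -card_ffun.
pose code (t : n.+1.-tuple Ed) := [ffun e => inord (index e t) : 'I_n.+2].
apply: (@leq_card_in _ _ code) => t1 t2; rewrite !inE !epathE => walk1 walk2 /ffunP code12.
apply/val_inj/walk_eq_of_index => //; first by rewrite !size_tuple.
have index_small (t : n.+1.-tuple Ed) e : index e t < n.+2.
  by rewrite ltnS (leq_trans (index_size _ _)) ?size_tuple.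
by move=> e; move/(congr1 val): (code12 e); rewrite !ffunE /= !inordK ?index_small.
Qed.

End EXC.
End Walks.

Local Open Scope classical_set_scope.
Local Open Scope ring_scope.

Section LogGrowth.
Variable R : realType.

Lemma ln_le_lnD_div (M x : R) : 0 < M -> 0 < x -> ln x <= ln M + x / M.
Proof.
move=> M_gt0 x_gt0; have xM_gt0 : 0 < x / M by rewrite divr_gt0.
rewrite -{1}(divfK (lt0r_neq0 M_gt0) x) mulrC lnM ?posrE //.
by rewrite lerD2l ltW // ln_sublinear.
Qed.

(* Includes [k = 0], since [ln 0 = 0] in the library. *)
Lemma ln_natr_ge0 (k : nat) : 0 <= ln (k%:R : R).
Proof. by case: k => [|k]; [rewrite ln0 | apply: ln_ge0; rewrite ler1n]. Qed.

Lemma ler_ln_natr (j k : nat) : (j <= k)%N -> ln (j%:R : R) <= ln k%:R.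
Proof.
case: j => [|j] le_jk; first by rewrite ln0 // ln_natr_ge0.
by rewrite ler_ln ?posrE ?ltr0n ?(leq_trans _ le_jk) // ler_nat.
Qed.

Lemma cvg_ln_natS_div : (ln (n.+1%:R : R) / n%:R) @[n --> \oo] --> 0.
Proof.
apply/cvgrPdist_le => e e_gt0; pose M := 4 / e.
have M_gt0 : 0 < M by rewrite divr_gt0.
near=> n.
have n_ge1 : 1 <= (n%:R : R) by near: n; apply: nbhs_infty_ger.
have n_big : 2 * ln M / e <= (n%:R : R) by near: n; apply: nbhs_infty_ger.
have n_gt0 : 0 < (n%:R : R) by apply: lt_le_trans n_ge1.
rewrite sub0r normrN ger0_norm ?divr_ge0 ?ln_natr_ge0 ?ler0n // ler_pdivrMr //.
(* [ln (n+1) <= ln M + (n+1) e / 4], and each term is at most [e n / 2]. *)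
have := ln_le_lnD_div M_gt0 (ltr0Sn _ n); rewrite -natr1.
have : 2 * ln M <= n%:R * e by rewrite -ler_pdivrMr.
have -> : (n%:R + 1) / M = (n%:R + 1) * e / 4 by rewrite /M invf_div mulrA.
nra.
Unshelve. all: by end_near.
Qed.

Lemma cvg_ln_div_poly_bounded (m : nat) (u : nat -> nat) :
  (\forall n \near \oo, (u n <= n.+1 ^ m)%N) ->
  (ln ((u n)%:R : R) / n%:R) @[n --> \oo] --> 0.
Proof.
move=> u_poly; apply/cvgrPdist_le => e e_gt0.
pose bound n := (ln (n.+1%:R : R) / n%:R) *+ m.
have bound_to0 : bound n @[n --> \oo] --> 0.
  by rewrite -(mul0rn _ m); apply: cvgMn; exact: cvg_ln_natS_div.
near=> n.
have bound_small : `|0 - bound n| <= e by near: n; exact: cvgr_dist_le bound_to0 _ e_gt0.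
have le_bound : ln ((u n)%:R : R) / n%:R <= bound n.
  rewrite /bound -mulrnAl ler_wpM2r ?invr_ge0 // -lnXn ?ltr0n // -natrX.
  by apply: ler_ln_natr; near: n.
rewrite sub0r normrN ger0_norm ?divr_ge0 ?ln_natr_ge0 // (le_trans le_bound) //.
by rewrite (le_trans (ler_norm _)) // -normrN -sub0r.
Unshelve. all: by end_near.
Qed.

End LogGrowth.

Theorem lemma5p12 (R : realType) (V Ed : finType) (s r : Ed -> V) :
  condition_EXC s r ->
  (forall v : V, ~ is_source r v) ->
  (forall v : V, ~ is_sink s v) ->
  h_alg s r R = 0%E.
Proof.
move=> exc _ _; rewrite /h_alg; case: pselect => [//|?].
suff /cvg_limn_einf_sup[_ ->] :
  ((ln (num_paths s r n)%:R / n%:R)%:E : \bar R) @[n --> \oo] --> 0%E by [].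
apply: cvg_EFin; first exact: nearW.
apply: (cvg_ln_div_poly_bounded (m := #|Ed|)).
by exists 1%N => // n; exact: num_paths_poly_bound.
Qed.
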